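(* A family of structures $\mathfrak{K}$ is $\mathbf{nUs}$-learnable if and only if $\mathfrak{K}$ is a solid $\Sigma^{\mathrm{inf}}_1$-partial order.
   Context: All structures are countable, have domain $\mathbb{N}$, are in a finite relational signature, and are identified with their atomic diagrams. A family of structures $\mathfrak{K}$ is a countable set of pairwise nonisomorphic such structures. $\mathcal{S}\restriction_s$ is the finite substructure of $\mathcal{S}$ on $\{0,\dots,s\}$. $\mathrm{LD}(\mathfrak{K})$ is the set of structures with domain $\mathbb{N}$ isomorphic to a member of $\mathfrak{K}$. The hypothesis space is $\{\ulcorner\mathcal{A}\urcorner:\mathcal{A}\in\mathfrak{K}\}\cup\{?\}$; a learner is an arbitrary function $\mathbf{M}$ from $\{\mathcal{S}\restriction_s:\mathcal{S}\in\mathrm{LD}(\mathfrak{K}),s\in\mathbb{N}\}$ to the hypothesis space. $\mathbf{M}$ $\mathbf{nUs}$-learns $\mathfrak{K}$ if for every $\mathcal{S}\in\mathrm{LD}(\mathfrak{K})$ with $\mathcal{S}\cong\mathcal{A}\in\mathfrak{K}$, $\mathbf{M}(\mathcal{S}\restriction_n)$ is eventually constantly $\ulcorner\mathcal{A}\urcorner$, and moreover if $n_0$ is least with $\mathbf{M}(\mathcal{S}\restriction_{n_0})=\ulcorner\mathcal{A}\urcorner$ then $\mathbf{M}(\mathcal{S}\restriction_m)=\ulcorner\mathcal{A}\urcorner$ for all $m>n_0$; $\mathfrak{K}$ is $\mathbf{nUs}$-learnable if some learner $\mathbf{nUs}$-learns it. $\mathrm{Th}_{\Sigma^{\mathrm{inf}}_1}(\mathcal{A})$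 is the set of $\Sigma^{\mathrm{inf}}_1$ sentences of $\mathcal{L}_{\omega_1\omega}$ true in $\mathcal{A}$ (a $\Sigma^{\mathrm{inf}}_1$ formula is a countable disjunction $\bigvee_i\exists\bar y_i\,\psi_i$ with each $\psi_i$ finitary quantifier-free). $\mathfrak{K}$ is a $\Sigma^{\mathrm{inf}}_1$-partial order if distinct members have distinct $\Sigma^{\mathrm{inf}}_1$-theories. $\mathfrak{K}$ is a solid $\Sigma^{\mathrm{inf}}_1$-partial order if it is a $\Sigma^{\mathrm{inf}}_1$-partial order and for every (nonempty) $\mathcal{A}\in\mathfrak{K}$, $\mathrm{Th}_{\Sigma^{\mathrm{inf}}_1}(\mathcal{A})\setminus\bigcup\{\mathrm{Th}_{\Sigma^{\mathrm{inf}}_1}(\mathcal{B}):\mathcal{B}\in\mathfrak{K},\ \mathrm{Th}_{\Sigma^{\mathrm{inf}}_1}(\mathcal{B})\subsetneq\mathrm{Th}_{\Sigma^{\mathrm{inf}}_1}(\mathcal{A})\}\neq\emptyset$. *)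

From mathcomp Require Import all_boot.

Set Implicit Arguments.
Unset Strict Implicit.
Unset Printing Implicit Defensive.

Section Learning.

(* A finite relational signature: k relation symbols, symbol i of arity ar i. *)
Variable k : nat.
Variable ar : 'I_k -> nat.

(* A structure with domain nat, identified with its atomic diagram:
   for each symbol i, the set of (ar i)-tuples on which R_i holds. *)
Definition structure := forall i : 'I_k, (ar i).-tuple nat -> Prop.

Definition iso (A B : structure) : Prop :=
  exists f : nat -> nat, bijective f /\
    forall (i : 'I_k) (t : (ar i).-tuple nat), A i t <-> B i (map_tuple f t).

(* A family: a countable set of pairwise nonisomorphic structures. *)
Definition struct_family (K : structure -> Prop) : Prop :=
  (exists g : structure -> nat,
      forall A B, K A -> K B -> g A = g B -> A = B) /\
  (forall A B, K A -> K B -> iso A B -> A = B).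

Definition LD (K : structure -> Prop) (S : structure) : Prop :=
  exists A, K A /\ iso S A.

(* The finite substructure S|_s on {0,...,s}, encoded by the pair (s, restr s S):
   restr s S is the atomic diagram of S restricted to tuples from {0,...,s}. *)
Definition restr (s : nat) (S : structure) : structure :=
  fun i t => all (fun x => x <= s) t /\ S i t.

(* A learner: a map from finite substructures (s, S|_s) to the hypothesis space,
   where [Some A] stands for the code of A and [None] for '?'. Since it is only
   ever applied to [restr s S], its value depends only on s and S|_s. *)
Definition learner := nat -> structure -> option structure.

Definition nUs_learns (M : learner) (K : structure -> Prop) : Prop :=
  (forall s S A, LD K S -> M s (restr s S) = Some A -> K A) /\
  forall S A, LD K S -> K A -> iso S A ->
    (exists N, forall n, N <= n -> M n (restr n S) = Some A) /\
    (forall n0, M n0 (restr n0 S) = Some A ->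
       (forall n, n < n0 -> M n (restr n S) <> Some A) ->
       forall m, n0 < m -> M m (restr m S) = Some A).

Definition nUs_learnable (K : structure -> Prop) : Prop :=
  exists M : learner, nUs_learns M K.

Inductive qf : Type :=
| QTrue : qf
| QRel (i : 'I_k) (t : (ar i).-tuple nat) : qf
| QEq (x y : nat) : qf
| QNot (p : qf) : qf
| QAnd (p q : qf) : qf
| QOr (p q : qf) : qf.

Fixpoint qf_sat (A : structure) (a : nat -> nat) (p : qf) : Prop :=
  match p with
  | QTrue => True
  | QRel i t => A i (map_tuple a t)
  | QEq x y => a x = a y
  | QNot p => ~ qf_sat A a p
  | QAnd p q => qf_sat A a p /\ qf_sat A a q
  | QOr p q => qf_sat A a p \/ qf_sat A a q
  end.

(* A Sigma^inf_1 sentence: a countable disjunction  \/_n  exists y_n, psi_n,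
   where psi_n is finitary quantifier-free and y_n lists all variables of psi_n
   (so each disjunct is a sentence). *)
Definition sigma1_sentence := nat -> qf.

Definition sat1 (A : structure) (phi : sigma1_sentence) : Prop :=
  exists n, exists a : nat -> nat, qf_sat A a (phi n).

Definition Th1 (A : structure) : sigma1_sentence -> Prop := fun phi => sat1 A phi.

Definition Th_sub (A B : structure) : Prop := forall phi, Th1 A phi -> Th1 B phi.
Definition Th_eq (A B : structure) : Prop := forall phi, Th1 A phi <-> Th1 B phi.
Definition Th_strict (B A : structure) : Prop := Th_sub B A /\ ~ Th_sub A B.

Definition sigma1_partial_order (K : structure -> Prop) : Prop :=
  forall A B, K A -> K B -> A <> B -> ~ Th_eq A B.

Definition solid_sigma1_partial_order (K : structure -> Prop) : Prop :=
  sigma1_partial_order K /\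
  forall A, K A ->
    exists phi, Th1 A phi /\
      forall B, K B -> Th_strict B A -> ~ Th1 B phi.

End Learning.

From mathcomp Require Import all_boot.
From Stdlib Require Import Classical ClassicalEpsilon FunctionalExtensionality PropExtensionality.

Set Implicit Arguments.
Unset Strict Implicit.
Unset Printing Implicit Defensive.

(* If M nUs-learns K, A is in K and Th(B) is contained in Th(A), let n0 be the
   first stage at which M guesses A on A. If B satisfied the diagram of A|n0, a
   copy S of B would extend A|n0; M settles on B along S at some stage n1, and
   since Th(B) is in Th(A), a copy of A extends S|n1. Along that copy M first
   guesses A at n0 and later B, contradicting the nUs condition. So the
   diagram of A|n0 separates A from all such B: K is a solid partial order.
   Conversely, fix for every A in K a finitary disjunct th A of a sentence
   true in A and false in all B with Th(B) strictly below Th(A). At stage s,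
   keep the previous conjecture if it is still a candidate (its index is at
   most s, th holds below s and S|s embeds into it), otherwise guess the
   candidate of least index. On a copy of A, A eventually stays a candidate;
   a wrong C whose th C holds in A has Th(A) not contained in Th(C), so S|s
   eventually stops embedding into C; hence the guess eventually becomes A
   and never leaves it. *)

Lemma classical_ex_minn (P : nat -> Prop) :
  (exists n, P n) -> exists2 n, P n & forall m, P m -> n <= m.
Proof.
pose p n := if excluded_middle_informative (P n) then true else false.
have pP n : reflect (P n) (p n).
  by rewrite /p; case: excluded_middle_informative => ?; constructor.
move=> [n /pP Pn]; have [m /pP Pm minm] := ex_minnP (ex_intro p n Pn).
by exists m => // j /pP /minm.
Qed.

Definition swap (a b x : nat) := if x == a then b else if x == b then a else x.

Lemma swapK a b : involutive (swap a b).
Proof.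
move=> x; rewrite /swap.
case: (eqVneq x a) => [->|xa]; first by rewrite eqxx; case: eqVneq => // ->.
case: (eqVneq x b) => [->|xb]; first by rewrite eqxx.
by rewrite (negbTE xa) (negbTE xb).
Qed.

Lemma extend_prefix_injection (h : nat -> nat) n :
  (forall x y, x <= n -> y <= n -> h x = h y -> x = y) ->
  exists f, bijective f /\ forall x, x <= n -> f x = h x.
Proof.
move=> h_inj.
suff : forall j, j <= n.+1 -> exists f, bijective f /\ forall x, x < j -> f x = h x.
  by move=> /(_ n.+1 (leqnn _)).
elim=> [|j IH] jn; first by exists id; split=> //; exists id.
have [f [f_bij fh]] := IH (ltnW jn).
(* post-composing with a transposition moves f j to h j without disturbing f below j *)
exists (swap (f j) (h j) \o f); split.
  by apply: bij_comp => //; exact: inv_bij (swapK _ _).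
move=> x; rewrite ltnS leq_eqVlt => /orP [/eqP -> | xj] /=.
  by rewrite /swap eqxx.
rewrite /swap (fh x xj).
have -> : (h x == f j) = false.
  by apply/negP => /eqP; rewrite -fh // => /(bij_inj f_bij) E; rewrite E ltnn in xj.
have -> : (h x == h j) = false.
  apply/negP => /eqP /h_inj E.
  by have := E (ltnW (leq_trans xj jn)) jn => E0; rewrite E0 ltnn in xj.
by [].
Qed.

Lemma map_tuple_comp n (T U V : Type) (f : U -> V) (g : T -> U) (t : n.-tuple T) :
  map_tuple f (map_tuple g t) = map_tuple (fun x => f (g x)) t.
Proof. by apply: val_inj; rewrite /= -map_comp. Qed.

Lemma map_tuple_id n (T : Type) (t : n.-tuple T) : map_tuple (fun x => x) t = t.
Proof. by apply: val_inj; rewrite /= map_id. Qed.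

Section Structures.

Variables (k : nat) (ar : 'I_k -> nat).
Implicit Types (S A B C X Y : structure ar) (K : structure ar -> Prop) (p : qf ar)
  (M : learner ar).

Fixpoint qf_vars p : seq nat :=
  match p with
  | QTrue => [::]
  | QRel _ t => tval t
  | QEq x y => [:: x; y]
  | QNot p => qf_vars p
  | QAnd p q | QOr p q => qf_vars p ++ qf_vars q
  end.

Lemma qf_sat_transfer X Y (P : pred nat) (h b : nat -> nat) p :
  (forall x, x \in qf_vars p -> P (b x)) ->
  (forall x y, P x -> P y -> h x = h y -> x = y) ->
  (forall i (t : (ar i).-tuple nat), all P t -> (X i t <-> Y i (map_tuple h t))) ->
  (qf_sat X b p <-> qf_sat Y (fun x => h (b x)) p).
Proof.
move=> Pb h_inj XY; elim: p Pb => //=.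
- move=> i t Pb; rewrite -[map_tuple (fun x => h (b x)) t]map_tuple_comp; apply: XY.
  by rewrite all_map; apply/allP => x /Pb.
- move=> x y Pb; split=> [-> // |]; apply: h_inj; apply: Pb;
    by rewrite !inE eqxx ?orbT.
- by move=> p IH Pb; rewrite IH.
- by move=> p IHp q IHq Pb; rewrite IHp ?IHq // => x Hx; apply: Pb;
    rewrite mem_cat Hx ?orbT.
- by move=> p IHp q IHq Pb; rewrite IHp ?IHq // => x Hx; apply: Pb;
    rewrite mem_cat Hx ?orbT.
Qed.

Lemma iso_refl S : iso S S.
Proof. by exists id; split; [exists id | move=> i t; rewrite map_tuple_id]. Qed.

Lemma iso_sym S A : iso S A -> iso A S.
Proof.
case=> f [[g fK gK] Sf]; exists g; split; first by exists f.
move=> i t; rewrite Sf map_tuple_comp.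
suff -> : map_tuple (fun x => f (g x)) t = t by [].
by apply: val_inj; rewrite /= (eq_map gK) map_id.
Qed.

Lemma structure_ext X Y : (forall i t, X i t <-> Y i t) -> X = Y.
Proof.
move=> XY; apply: functional_extensionality_dep => i.
by apply: functional_extensionality => t; apply: propositional_extensionality.
Qed.

Lemma restr_ext n X Y :
  (forall i (t : (ar i).-tuple nat), all (fun x => x <= n) t -> (X i t <-> Y i t)) ->
  restr n X = restr n Y.
Proof.
by move=> XY; apply: structure_ext => i t; split=> -[tn ?]; split=> //; apply/(XY i t tn).
Qed.

Lemma restr_restr m n X : m <= n -> restr m (restr n X) = restr m X.
Proof.
move=> mn; apply: structure_ext => i t; split=> [[tm [_ Xt]] // | [tm Xt]].
by split=> //; split=> //; apply: sub_all tm => x /= xm; exact: leq_trans xm mn.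
Qed.

Lemma restr_eq_le m n X Y : m <= n -> restr n X = restr n Y -> restr m X = restr m Y.
Proof. by move=> mn E; rewrite -(restr_restr X mn) E restr_restr. Qed.

Lemma qf_sat_restr s X b p :
  (forall x, x \in qf_vars p -> b x <= s) ->
  (qf_sat (restr s X) b p <-> qf_sat X b p).
Proof.
move=> bs; symmetry; apply: (qf_sat_transfer (P := fun x => x <= s) (h := id)) => //.
by move=> i t ts; rewrite map_tuple_id; split=> // -[].
Qed.

Definition sat_below s X p :=
  exists b : nat -> nat, (forall x, x \in qf_vars p -> b x <= s) /\ qf_sat X b p.

Lemma sat_below_restr s X p : sat_below s (restr s X) p <-> sat_below s X p.
Proof. by split=> -[b [bs Xb]]; exists b; split=> //; move: Xb; rewrite qf_sat_restr. Qed.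

Lemma sat_below_le s s' X p : s <= s' -> sat_below s X p -> sat_below s' X p.
Proof. by move=> ss' [b [bs Xb]]; exists b; split=> // x /bs /leq_trans; apply. Qed.

Lemma sat_below_exists X a p : qf_sat X a p -> exists s, sat_below s X p.
Proof.
exists (\max_(x <- qf_vars p) a x), a; split=> // x xp.
exact: (leq_bigmax_seq (P := predT)).
Qed.

Definition pembed s X Y :=
  exists h : nat -> nat, (forall x y, x <= s -> y <= s -> h x = h y -> x = y) /\
    forall i (t : (ar i).-tuple nat), all (fun x => x <= s) t ->
      (X i t <-> Y i (map_tuple h t)).

Lemma pembed_restr s X Y : pembed s (restr s X) Y <-> pembed s X Y.
Proof.
by split=> -[h [h_inj XY]]; exists h; split=> // i t ts; rewrite -XY // /restr; tauto.
Qed.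

Lemma pembed_le s s' X Y : s <= s' -> pembed s' X Y -> pembed s X Y.
Proof.
move=> ss' [h [h_inj XY]]; have le_s' x : x <= s -> x <= s' by move/leq_trans; apply.
exists h; split=> [x y /le_s' xs /le_s' ys | i t ts]; first exact: h_inj.
by apply: XY; apply: sub_all ts.
Qed.

Lemma iso_pembed s S A : iso S A -> pembed s S A.
Proof. by case=> f [f_bij Sf]; exists f; split=> [x y _ _ | i t _]; [exact: bij_inj | exact: Sf]. Qed.

Lemma pembed_sat_below s X Y p :
  pembed s X Y -> sat_below s X p -> exists a, qf_sat Y a p.
Proof.
move=> [h [h_inj XY]] [b [bs Xb]]; exists (fun x => h (b x)).
exact/(qf_sat_transfer (P := fun x => x <= s) bs h_inj XY).
Qed.

Lemma Th_sub_pembed X Y : (forall s, pembed s X Y) -> Th_sub X Y.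
Proof.
move=> XY phi [n [a Xa]]; have [s Xs] := sat_below_exists Xa.
by have [b Yb] := pembed_sat_below (XY s) Xs; exists n, b.
Qed.

Lemma iso_Th_sub S A : iso S A -> Th_sub S A.
Proof. by move=> SA; apply: Th_sub_pembed => s; exact: iso_pembed. Qed.

Lemma iso_qf_sat S A p : iso S A -> (exists a, qf_sat S a p) -> exists a, qf_sat A a p.
Proof.
move=> /iso_Th_sub SA [a Sa].
by have [_ [b Ab]] := SA (fun _ => p) (ex_intro _ 0 (ex_intro _ a Sa)); exists b.
Qed.

Definition bigand (l : seq (qf ar)) : qf ar := foldr (@QAnd k ar) (QTrue ar) l.

Lemma sat_bigand (T : eqType) (F : T -> qf ar) (l : seq T) X a :
  qf_sat X a (bigand (map F l)) <-> forall x, x \in l -> qf_sat X a (F x).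
Proof.
elim: l => [|y l IH] //=; rewrite IH; split=> [[Fy Fl] x | Fl].
  by rewrite inE => /orP [/eqP -> | /Fl].
by split=> [|x xl]; apply: Fl; rewrite inE ?eqxx ?xl ?orbT.
Qed.

Definition lit (P : Prop) p := if excluded_middle_informative P then p else QNot p.

(* The diagram of A|n as a Sigma1 sentence with variables 0, ..., n. *)
Definition diagram n A : sigma1_sentence ar := fun _ =>
  QAnd
    (bigand (map (fun i => bigand (map (fun t : (ar i).-tuple 'I_n.+1 =>
        lit (A i (map_tuple val t)) (QRel (map_tuple val t)))
        (enum {: (ar i).-tuple 'I_n.+1}))) (enum 'I_k)))
    (bigand (map (fun xy : 'I_n.+1 * 'I_n.+1 =>
        if xy.1 == xy.2 then QTrue ar else QNot (QEq ar xy.1 xy.2))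
        (enum {: 'I_n.+1 * 'I_n.+1}))).

Lemma diagram_self n A : Th1 A (diagram n A).
Proof.
exists 0, id; split.
- apply/sat_bigand => i _; apply/sat_bigand => t _; rewrite /lit.
  by case: excluded_middle_informative; rewrite /= map_tuple_id.
- apply/sat_bigand => -[x y] _ /=; case: eqP => //= xy xy'.
  by apply: xy; exact: val_inj.
Qed.

Lemma diagram_pembed n A Y : Th1 Y (diagram n A) -> pembed n A Y.
Proof.
case=> _ [a [/sat_bigand Arel /sat_bigand Aneq]]; exists a; split.
- move=> x y xn yn axy; apply: NNPP => xy.
  have := Aneq (inord x, inord y); rewrite mem_enum /= => /(_ isT).
  have -> : (inord x == inord y :> 'I_n.+1) = false.
    by apply/negP => /eqP /(congr1 val); rewrite /= !inordK.
  by rewrite /= !inordK.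
- move=> i t tn; have := Arel i; rewrite mem_enum => /(_ isT) /sat_bigand.
  move=> /(_ (map_tuple (@inord n) t)); rewrite mem_enum => /(_ isT).
  have -> : map_tuple val (map_tuple (@inord n) t) = t.
    apply: val_inj; rewrite /= -map_comp -[RHS]map_id; apply/eq_in_map => x xt /=.
    by rewrite inordK // ltnS; move/allP: tn => /(_ x xt).
  by rewrite /lit; case: excluded_middle_informative => /= At Yt; split.
Qed.

Lemma pembed_copy n A Y : pembed n A Y -> exists2 S, iso S Y & restr n S = restr n A.
Proof.
case=> h [h_inj AY]; have [f [f_bij fh]] := extend_prefix_injection h_inj.
exists (fun i t => Y i (map_tuple f t)); first by exists f.
apply: restr_ext => i t tn; rewrite AY //.
suff -> : map_tuple f t = map_tuple h t by [].
by apply: val_inj; apply/eq_in_map => x xt; apply: fh; exact: (allP tn).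
Qed.

Lemma diagram_copy n A Y : Th1 Y (diagram n A) -> exists2 S, iso S Y & restr n S = restr n A.
Proof. by move/diagram_pembed/pembed_copy. Qed.

Definition first_guess M X A n0 :=
  M n0 (restr n0 X) = Some A /\ forall n, n < n0 -> M n (restr n X) <> Some A.

Lemma first_guess_restr M X Y A n0 :
  restr n0 X = restr n0 Y -> first_guess M X A n0 -> first_guess M Y A n0.
Proof.
move=> XY [Mn0 Mlt]; split; first by rewrite -XY.
by move=> n nn0; rewrite -(restr_eq_le (ltnW nn0) XY); exact: Mlt.
Qed.

Lemma nUs_first_guess M K A : nUs_learns M K -> K A -> exists n0, first_guess M A A n0.
Proof.
move=> [_ learn] KA; have LDA : LD K A by exists A; split=> //; exact: iso_refl.
have [[N MN] _] := learn A A LDA KA (iso_refl A).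
have [n0 Mn0 n0_min] :=
  classical_ex_minn (ex_intro (fun n => M n (restr n A) = Some A) N (MN N (leqnn _))).
by exists n0; split=> // n nn0 /n0_min; rewrite leqNgt nn0.
Qed.

Lemma nUs_diagram_separates M K A B n0 :
  nUs_learns M K -> K A -> K B -> A <> B -> Th_sub B A ->
  first_guess M A A n0 -> ~ Th1 B (diagram n0 A).
Proof.
move=> [_ learn] KA KB AB BA An0 /diagram_copy [SB SB_B SB_A].
have [[N MN] _] := learn SB B (ex_intro _ B (conj KB SB_B)) KB SB_B.
set n1 := (N + n0).+1.
have n0n1 : n0 < n1 by rewrite ltnS leq_addl.
have Nn1 : N <= n1 by rewrite ltnW // ltnS leq_addr.
have /BA /diagram_copy [SA SA_A SA_SB] : Th1 B (diagram n1 SB).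
  exact: iso_Th_sub SB_B _ (diagram_self n1 SB).
have SAn0 : first_guess M SA A n0.
  apply: first_guess_restr An0.
  by rewrite -SB_A; symmetry; exact: restr_eq_le (ltnW n0n1) SA_SB.
have [_ stable] := learn SA A (ex_intro _ A (conj KA SA_A)) KA SA_A.
have := stable n0 SAn0.1 SAn0.2 n1 n0n1.
by rewrite SA_SB MN // => -[/esym].
Qed.

Lemma nUs_learnable_solid K : nUs_learnable K -> solid_sigma1_partial_order K.
Proof.
case=> M learn; split=> [A B KA KB AB AeqB | A KA].
  have [n0 An0] := nUs_first_guess learn KA.
  apply: (nUs_diagram_separates learn KA KB AB _ An0); first by move=> phi /AeqB.
  by apply/AeqB; exact: diagram_self.
have [n0 An0] := nUs_first_guess learn KA.
exists (diagram n0 A); split=> [|B KB [BA AB]]; first exact: diagram_self.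
by apply: (nUs_diagram_separates learn KA KB _ BA An0) => E; apply: AB; rewrite E.
Qed.

Definition separates (K : structure ar -> Prop) (th : structure ar -> qf ar) :=
  forall A, K A -> (exists a, qf_sat A a (th A)) /\
    forall B, K B -> Th_strict B A -> forall a, ~ qf_sat B a (th A).

Lemma solid_separates K : solid_sigma1_partial_order K -> exists th, separates K th.
Proof.
move=> [_ solid]; apply: (choice (fun A q => K A -> (exists a, qf_sat A a q) /\
  forall B, K B -> Th_strict B A -> forall a, ~ qf_sat B a q)) => A.
case: (classic (K A)) => [KA | nKA]; last by exists (QTrue ar).
have [phi [[n [a Aa]] phi_sep]] := solid A KA.
exists (phi n) => _; split=> [|B KB BA b Bb]; first by exists a.
by apply: (phi_sep B KB BA); exists n, b.
Qed.

Section Learner.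

Variables (K : structure ar -> Prop) (g : structure ar -> nat) (th : structure ar -> qf ar).

Definition candidate s Y C := K C /\ g C <= s /\ sat_below s Y (th C) /\ pembed s Y C.

Definition least_candidate s Y : option (structure ar) :=
  match excluded_middle_informative
     (exists A, candidate s Y A /\ forall B, candidate s Y B -> g A <= g B) with
  | left H => Some (proj1_sig (constructive_indefinite_description _ H))
  | right _ => None
  end.

Fixpoint conjecture s X : option (structure ar) :=
  if s is s'.+1 then
    if conjecture s' X is Some A then
      if excluded_middle_informative (candidate s (restr s X) A) then Some A
      else least_candidate s (restr s X)
    else least_candidate s (restr s X)
  else least_candidate 0 (restr 0 X).

Lemma least_candidateP s Y C :
  least_candidate s Y = Some C ->
  candidate s Y C /\ forall B, candidate s Y B -> g C <= g B.
Proof.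
rewrite /least_candidate; case: excluded_middle_informative => // H [<-].
exact: proj2_sig (constructive_indefinite_description _ H).
Qed.

Lemma least_candidate_None s Y C : least_candidate s Y = None -> ~ candidate s Y C.
Proof.
rewrite /least_candidate; case: excluded_middle_informative => // nH _ YC; apply: nH.
have [_ [A [YA <-]] A_min] := classical_ex_minn
  (ex_intro (fun n => exists A, candidate s Y A /\ g A = n) (g C) (ex_intro _ C (conj YC erefl))).
by exists A; split=> // B YB; apply: A_min; exists B.
Qed.

Lemma conjecture_candidate s X C : conjecture s X = Some C -> candidate s (restr s X) C.
Proof.
case: s => [|s] /=; first by move=> /least_candidateP [].
case: (conjecture s X) => [A|]; last by move=> /least_candidateP [].
by case: excluded_middle_informative => [? [<-] // | _ /least_candidateP []].
Qed.

Lemma conjecture_restr s n X : s <= n -> conjecture s (restr n X) = conjecture s X.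
Proof.
elim: s => [|s IH] sn /=; first by rewrite restr_restr.
by rewrite IH ?(ltnW sn) // restr_restr.
Qed.

Lemma conjecture_None s X : conjecture s X = None -> least_candidate s (restr s X) = None.
Proof.
case: s => [|s] //=; case: (conjecture s X) => [A|] //.
by case: excluded_middle_informative.
Qed.

Lemma conjecture_keep_or_least s X :
  conjecture s.+1 X = conjecture s X \/
  conjecture s.+1 X = least_candidate s.+1 (restr s.+1 X).
Proof.
rewrite /=; case: (conjecture s X) => [A|]; last by right.
by case: excluded_middle_informative; [left | right].
Qed.

Hypothesis g_inj : forall A B, K A -> K B -> g A = g B -> A = B.
Hypothesis K_po : sigma1_partial_order K.
Hypothesis th_sep : separates K th.

Lemma separates_not_Th_sub A C a :
  K A -> K C -> C <> A -> qf_sat A a (th C) -> ~ Th_sub A C.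
Proof.
move=> KA KC CA Aa AC; case: (classic (Th_sub C A)) => [CsubA | nCA].
  by apply: (K_po KC KA CA) => phi; split; [exact: CsubA | exact: AC].
exact: (th_sep KC).2 A KA (conj AC nCA) a Aa.
Qed.

Section Convergence.

Variables (S A : structure ar).
Hypotheses (KA : K A) (SA : iso S A).

Lemma candidate_target s : g A <= s -> sat_below s S (th A) -> candidate s (restr s S) A.
Proof.
move=> gA SthA; split=> //; split=> //; split; first exact/sat_below_restr.
by apply/pembed_restr; exact: iso_pembed.
Qed.

Lemma candidate_target_eventually : exists s1, forall s, s1 <= s -> candidate s (restr s S) A.
Proof.
have [b Sb] := iso_qf_sat (iso_sym SA) (th_sep KA).1.
have [s0 Ss0] := sat_below_exists Sb.
exists (maxn s0 (g A)) => s; rewrite geq_max => /andP [s0s gAs].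
by apply: candidate_target gAs _; exact: sat_below_le s0s Ss0.
Qed.

Lemma candidate_wrong_eventually C :
  K C -> C <> A -> exists s0, forall s, s0 <= s -> ~ candidate s (restr s S) C.
Proof.
move=> KC CA.
case: (classic (exists a, qf_sat A a (th C))) => [[a Aa] | nAthC]; last first.
  exists 0 => s _ [_ [_ [/sat_below_restr [b [_ Sb]] _]]]; apply: nAthC.
  exact: iso_qf_sat SA (ex_intro _ b Sb).
have nAC := separates_not_Th_sub KA KC CA Aa.
have [s0 ns0] : exists s0, ~ pembed s0 S C.
  apply: NNPP => all_pembed; apply: nAC => phi /(iso_Th_sub (iso_sym SA)).
  by apply: Th_sub_pembed => s; apply: NNPP => ns; apply: all_pembed; exists s.
by exists s0 => s s0s [_ [_ [_ /pembed_restr /(pembed_le s0s)]]].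
Qed.

Lemma candidate_below_eventually N :
  exists s0, forall s, s0 <= s -> forall B, candidate s (restr s S) B -> g B < N -> B = A.
Proof.
elim: N => [|N [s0 IH]]; first by exists 0.
case: (classic (exists2 C, K C & g C = N /\ C <> A)) => [[C KC [gC CA]] | noC].
  have [sC HC] := candidate_wrong_eventually KC CA.
  exists (maxn s0 sC) => s; rewrite geq_max => /andP [s0s sCs] B SB.
  rewrite ltnS leq_eqVlt => /orP [/eqP gB | /(IH s s0s B SB) //].
  have BC : B = C by apply: g_inj SB.1 KC _; rewrite gB gC.
  by case: (HC s sCs); rewrite -BC.
exists s0 => s s0s B SB; rewrite ltnS leq_eqVlt => /orP [/eqP gB | /(IH s s0s B SB) //].
by apply: NNPP => BA; apply: noC; exists B; [exact: SB.1 | split].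
Qed.

Lemma least_candidate_eventually :
  exists s3, forall s, s3 <= s -> least_candidate s (restr s S) = Some A.
Proof.
have [s1 H1] := candidate_target_eventually.
have [s2 H2] := candidate_below_eventually (g A).
exists (maxn s1 s2) => s; rewrite geq_max => /andP [s1s s2s].
case E: least_candidate => [C|]; last by case: (least_candidate_None E (H1 s s1s)).
have [SC C_min] := least_candidateP E.
have gAC : g A <= g C.
  by rewrite leqNgt; apply/negP => lt; move: (lt); rewrite (H2 s s2s C SC lt) ltnn.
congr Some; apply: g_inj SC.1 KA _; apply/eqP.
by rewrite eqn_leq gAC C_min //; exact: H1.
Qed.

Lemma conjecture_stable n m : conjecture n S = Some A -> n <= m -> conjecture m S = Some A.
Proof.
move=> Sn; have [_ [gAn [/sat_below_restr Sth _]]] := conjecture_candidate Sn.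
elim: m => [|m IH]; first by rewrite leqn0 => /eqP <-.
rewrite leq_eqVlt => /orP [/eqP <- // | nm] /=; rewrite IH //.
case: excluded_middle_informative => // -[].
apply: candidate_target; first exact: leq_trans gAn (ltnW nm).
exact: sat_below_le (ltnW nm) Sth.
Qed.

Lemma conjecture_reaches : exists n, conjecture n S = Some A.
Proof.
have [s3 H3] := least_candidate_eventually.
(* from s3 on, a change of conjecture can only be a change to A *)
have late j : conjecture (s3 + j) S = Some A \/ conjecture (s3 + j) S = conjecture s3 S.
  elim: j => [|j IH]; first by rewrite addn0; right.
  rewrite addnS; case: (conjecture_keep_or_least (s3 + j) S) => ->; first exact: IH.
  by left; rewrite H3 // leqW // leq_addr.
case E: (conjecture s3 S) => [C|]; last by move: (conjecture_None E); rewrite H3.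
case: (classic (C = A)) => [<- | CA]; first by exists s3.
have [sC HC] := candidate_wrong_eventually (conjecture_candidate E).1 CA.
exists (s3 + sC); case: (late sC) => // E'.
by case: (HC (s3 + sC) (leq_addl _ _)); apply: conjecture_candidate; rewrite E' E.
Qed.

End Convergence.

Lemma conjecture_nUs_learns : nUs_learns conjecture K.
Proof.
split; first by move=> s S A _ /conjecture_candidate [].
move=> S A _ KA SA; have restrE n : conjecture n (restr n S) = conjecture n S.
  exact: conjecture_restr.
have [n0 Sn0] := conjecture_reaches KA SA.
split; first by exists n0 => n n0n; rewrite restrE; exact: conjecture_stable Sn0 n0n.
move=> m0; rewrite restrE => Sm0 _ m m0m; rewrite restrE.
exact: conjecture_stable Sm0 (ltnW m0m).
Qed.

End Learner.

End Structures.

Theorem mainTheorem11 (k : nat) (ar : 'I_k -> nat) (K : structure ar -> Prop) :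
  struct_family K -> (nUs_learnable K <-> solid_sigma1_partial_order K).
Proof.
move=> [[g g_inj] _]; split; first exact: nUs_learnable_solid.
move=> solid; have [th th_sep] := solid_separates solid.
by exists (conjecture K g th); exact: conjecture_nUs_learns g_inj solid.1 th_sep.
Qed.
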